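(* Let $\mathcal H$ be a separable complex Hilbert space, $A\in L(\mathcal H)^+$ and $T\in L(\mathcal H)$. If $T$ is an $A$-idempotent then $I-T$ is an $A$-idempotent; and if $T$ is an $A$-projection then $I-T$ is an $A$-projection.
   Context: $L(\mathcal H)^+$ denotes the positive (semidefinite) bounded operators. For $A\in L(\mathcal H)^+$, $\|x\|_A=\langle Ax,x\rangle^{1/2}$. $T\in L(\mathcal H)$ is an $A$-idempotent if $AT^2=AT$. $T$ is an $A$-projection if $\|y-Ty\|_A\le\|y-s\|_A$ for all $y\in\mathcal H$ and all $s\in\overline{R(T)}$ (i.e. $T$ is an $A$-projection into the closure of its range). *)

From HB Require Import structures.
From mathcomp Require Import all_boot all_order all_algebra.
From mathcomp Require Import complex.
From mathcomp Require Import reals.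
Set Implicit Arguments. Unset Strict Implicit. Unset Printing Implicit Defensive.
Import Order.TTheory GRing.Theory Num.Theory.
Local Open Scope ring_scope.
Local Open Scope complex_scope.

Section Hilbert.
Variables (R : realType) (V : lmodType R[i]) (ip : V -> V -> R[i]).

Definition is_inner_product : Prop :=
  [/\ forall (a : R[i]) (x y z : V), ip (a *: x + y) z = a * ip x z + ip y z,
      forall x y : V, ip y x = (ip x y)^*,
      forall x : V, 0 <= ip x x
    & forall x : V, ip x x = 0 -> x = 0].

Definition ipnorm (x : V) : R := Num.sqrt (complex.Re (ip x x)).

Definition cauchy_seq (u : nat -> V) : Prop :=
  forall e : R, 0 < e -> exists N, forall m n, (N <= m)%N -> (N <= n)%N ->
    ipnorm (u m - u n) < e.

Definition converges_to (u : nat -> V) (l : V) : Prop :=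
  forall e : R, 0 < e -> exists N, forall n, (N <= n)%N -> ipnorm (u n - l) < e.

Definition ip_complete : Prop :=
  forall u : nat -> V, cauchy_seq u -> exists l, converges_to u l.

Definition ip_separable : Prop :=
  exists d : nat -> V, forall (x : V) (e : R), 0 < e -> exists n, ipnorm (x - d n) < e.

Definition separable_hilbert : Prop :=
  [/\ is_inner_product, ip_complete & ip_separable].

Definition bounded_op (T : {linear V -> V}) : Prop :=
  exists M : R, forall x, ipnorm (T x) <= M * ipnorm x.

Definition positive_op (A : {linear V -> V}) : Prop :=
  bounded_op A /\ forall x, 0 <= ip (A x) x.

Definition Anorm (A : {linear V -> V}) (x : V) : R := Num.sqrt (complex.Re (ip (A x) x)).

Definition A_idempotent (A T : {linear V -> V}) : Prop :=
  forall x, A (T (T x)) = A (T x).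

Definition in_closure_range (T : {linear V -> V}) (s : V) : Prop :=
  forall e : R, 0 < e -> exists x, ipnorm (s - T x) < e.

Definition A_projection (A T : {linear V -> V}) : Prop :=
  forall y s, in_closure_range T s -> Anorm A (y - T y) <= Anorm A (y - s).

End Hilbert.

Section IminusT.
Variables (R : realType) (V : lmodType R[i]) (T : {linear V -> V}).
Definition IminusT_fun (x : V) : V := x - T x.
Fact IminusT_is_linear : linear IminusT_fun.
Proof. by move=> a x y; rewrite /IminusT_fun linearP scalerBr addrACA opprD. Qed.
HB.instance Definition _ := GRing.isLinear.Build R[i] V V _ IminusT_fun IminusT_is_linear.
Definition IminusT : {linear V -> V} := IminusT_fun.
End IminusT.

(* For an A-idempotent T, A(I - T)^2 = A - 2AT + AT^2 = A(I - T).

   For an A-projection T, comparing ||y - Ty||_A with the distances from y to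
   the points T(y - r z) of R(T), r real, shows that y - Ty is A-orthogonal to
   R(T), so I - T maps into the A-orthogonal complement of R(T).  As A is
   bounded for the Hilbert norm, so is x |-> Re <A(Ty), x>, and the
   orthogonality passes to the closure of R(I - T).  Hence for s in that closure, y - s splits A-orthogonally as
   Ty + ((y - Ty) - s), so ||y - s||_A >= ||Ty||_A, the A-distance from y to
   (I - T)y. *)
From HB Require Import structures.
From mathcomp Require Import all_boot all_order all_algebra.
From mathcomp Require Import complex reals.
From mathcomp Require Import ring lra.
Import Order.TTheory GRing.Theory Num.Theory.
Set Implicit Arguments. Unset Strict Implicit.
Local Open Scope ring_scope.

Lemma discriminant_le (R : realFieldType) (a b d : R) :
  0 <= a -> (forall r, 0 <= a * r ^+ 2 + 2 * b * r + d) -> b ^+ 2 <= a * d.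
Proof.
move=> a_ge0 quad_ge0; have := quad_ge0 0.
rewrite expr2 !mulr0 !add0r => d_ge0.
move: a_ge0 quad_ge0; rewrite le0r => /orP[/eqP-> | a_gt0] quad_ge0.
  have [-> | b_neq0] := eqVneq b 0; first by rewrite expr2 !mul0r.
  have := quad_ge0 (- (d + 1) / (2 * b)).
  have -> : 2 * b * (- (d + 1) / (2 * b)) = - (d + 1) by field.
  by rewrite !mul0r; lra.
have := mulr_ge0 (ltW a_gt0) (quad_ge0 (- b / a)).
have -> : a * (a * (- b / a) ^+ 2 + 2 * b * (- b / a) + d) = a * d - b ^+ 2.
  by field; rewrite gt_eqF.
by rewrite subr_ge0.
Qed.

Section InnerProduct.
Local Open Scope complex_scope.
Variables (R : realType) (V : lmodType R[i]) (ip : V -> V -> R[i]).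
Hypothesis ip_inner : is_inner_product ip.

Local Notation reip x y := (complex.Re (ip x y)).

Lemma Re_add (a b : R[i]) : complex.Re (a + b) = complex.Re a + complex.Re b.
Proof. by case: a; case: b. Qed.

Lemma Re_realM (r : R) (a : R[i]) : complex.Re (r%:C * a) = r * complex.Re a.
Proof. by case: a => x y /=; rewrite mul0r subr0. Qed.

Lemma Re_conj (a : R[i]) : complex.Re a^* = complex.Re a.
Proof. by case: a. Qed.

Lemma ip0l z : ip 0 z = 0.
Proof.
case: ip_inner => ipZD _ _ _; have := ipZD 1 0 0 z.
by rewrite scale1r addr0 mul1r => /(congr1 (fun t => t - ip 0 z)); rewrite addrK subrr.
Qed.

Lemma reipDl x y z : reip (x + y) z = reip x z + reip y z.
Proof. by case: ip_inner => ipZD _ _ _; rewrite -{1}(scale1r x) ipZD mul1r Re_add. Qed.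

Lemma reipZl (r : R) x z : reip (r%:C *: x) z = r * reip x z.
Proof.
by case: ip_inner => ipZD _ _ _; rewrite -[r%:C *: x]addr0 ipZD ip0l addr0 Re_realM.
Qed.

Lemma reipC x y : reip x y = reip y x.
Proof. by case: ip_inner => _ ipJ _ _; rewrite ipJ Re_conj. Qed.

Lemma reipNl x z : reip (- x) z = - reip x z.
Proof.
by have := reipZl (-1) x z; rewrite mulN1r => <-; rewrite rmorphN rmorph1 scaleN1r.
Qed.

Lemma reipDr x y z : reip z (x + y) = reip z x + reip z y.
Proof. by rewrite reipC reipDl !(reipC z). Qed.

Lemma reipZr (r : R) x z : reip z (r%:C *: x) = r * reip z x.
Proof. by rewrite reipC reipZl reipC. Qed.

Lemma reipNr x z : reip z (- x) = - reip z x.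
Proof. by rewrite reipC reipNl reipC. Qed.

Lemma reip_ge0 x : 0 <= reip x x.
Proof. by case: ip_inner => _ _ ip_ge0 _; have := ip_ge0 x; rewrite lecE => /andP[]. Qed.

Lemma ipnorm0 : ipnorm ip 0 = 0.
Proof. by rewrite /ipnorm ip0l sqrtr0. Qed.

Lemma ipnorm_sqr x : ipnorm ip x ^+ 2 = reip x x.
Proof. exact/sqr_sqrtr/reip_ge0. Qed.

Lemma reip_sqr_le x y : reip x y ^+ 2 <= reip x x * reip y y.
Proof.
apply: discriminant_le (reip_ge0 x) _ => r.
have := reip_ge0 (r%:C *: x + y).
rewrite !(reipDl, reipDr, reipZl, reipZr) (reipC y x); lra.
Qed.

Lemma normr_reip_le x y : `|reip x y| <= ipnorm ip x * ipnorm ip y.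
Proof.
rewrite -ler_sqr ?nnegrE ?mulr_ge0 ?sqrtr_ge0 //.
by rewrite real_normK ?num_real // exprMn !ipnorm_sqr reip_sqr_le.
Qed.

Lemma mem_closure_range (S : {linear V -> V}) x : in_closure_range ip S (S x).
Proof. by move=> e e_gt0; exists x; rewrite subrr ipnorm0. Qed.

Lemma closure_range_vanish (S : {linear V -> V}) (f : V -> R) (c : R) :
    (forall u v, f (u - v) = f u - f v) ->
    (forall v, `|f v| <= c * ipnorm ip v) ->
    (forall x, f (S x) = 0) ->
  forall s, in_closure_range ip S s -> f s = 0.
Proof.
move=> fB f_le f_range s s_cl; apply/eqP; rewrite -normr_le0.
apply/ler_addgt0Pr => e e_gt0; rewrite add0r.
have c1_gt0 : 0 < `|c| + 1 by rewrite ltr_wpDl.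
have [x near_sx] := s_cl _ (divr_gt0 e_gt0 c1_gt0).
have -> : f s = f (s - S x) by rewrite fB f_range subr0.
have n_ge0 : 0 <= ipnorm ip (s - S x) := sqrtr_ge0 _.
have c_le := ler_norm c.
have := f_le (s - S x); rewrite ltr_pdivlMr // in near_sx; nra.
Qed.

Section SemiInnerProduct.
Variable A : {linear V -> V}.
Hypothesis A_pos : positive_op ip A.

Definition Asq x := reip (A x) x.

(* Twice the real part of the A-semi-inner product <u, v>_A = <Au, v>. *)
Definition Adot u v := reip (A u) v + reip (A v) u.

Lemma Asq_ge0 x : 0 <= Asq x.
Proof. by case: A_pos => _ A_ge0; have := A_ge0 x; rewrite lecE => /andP[]. Qed.

Lemma ler_Anorm x y : (Anorm ip A x <= Anorm ip A y) = (Asq x <= Asq y).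
Proof. exact/ler_sqrt/Asq_ge0. Qed.

Lemma AsqD u v : Asq (u + v) = Asq u + Asq v + Adot u v.
Proof. by rewrite /Asq /Adot linearD /= !(reipDl, reipDr); lra. Qed.

Lemma AsqZ (r : R) v : Asq (r%:C *: v) = r ^+ 2 * Asq v.
Proof. by rewrite /Asq linearZ /= reipZl reipZr mulrA -expr2. Qed.

Lemma AdotC u v : Adot u v = Adot v u.
Proof. exact: addrC. Qed.

Lemma AdotZr (r : R) u v : Adot u (r%:C *: v) = r * Adot u v.
Proof. by rewrite /Adot linearZ /= reipZl reipZr mulrDr. Qed.

Lemma AdotBr u v w : Adot u (v - w) = Adot u v - Adot u w.
Proof. by rewrite /Adot linearB /= !(reipDl, reipDr, reipNl, reipNr); lra. Qed.

Lemma normr_Adot_le (M : R) u v :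
    (forall x, ipnorm ip (A x) <= M * ipnorm ip x) ->
  `|Adot u v| <= (ipnorm ip (A u) + M * ipnorm ip u) * ipnorm ip v.
Proof.
move=> A_bdd; rewrite mulrDl (le_trans (ler_normD _ _)) // lerD //.
  exact: normr_reip_le.
rewrite (le_trans (normr_reip_le _ _)) // mulrAC ler_wpM2r ?sqrtr_ge0 //.
Qed.

Lemma A_projection_Adot (T : {linear V -> V}) y z :
  A_projection ip A T -> Adot (y - T y) (T z) = 0.
Proof.
move=> T_proj; set S := Adot _ _.
have quad_ge0 r : 0 <= Asq (T z) * r ^+ 2 + 2 * (S / 2) * r + 0.
  have : Asq (y - T y) <= Asq (y - T y + r%:C *: T z).
    have -> : y - T y + r%:C *: T z = y - T (y - r%:C *: z).
      by rewrite linearB linearZ /= opprB addrCA addrC.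
    by rewrite -ler_Anorm; apply/T_proj/mem_closure_range.
  by rewrite [X in _ <= X]AsqD AsqZ AdotZr -/S; lra.
by have := discriminant_le (Asq_ge0 _) quad_ge0; nra.
Qed.
End SemiInnerProduct.
End InnerProduct.

Section IminusT.
Variables (R : realType) (V : lmodType R[i]) (T : {linear V -> V}).

Lemma IminusTE x : IminusT T x = x - T x.
Proof. by []. Qed.

Lemma A_idempotent_IminusT (A : {linear V -> V}) :
  A_idempotent A T -> A_idempotent A (IminusT T).
Proof. by move=> T_idem x; rewrite !IminusTE !linearB /= T_idem subrr addr0. Qed.

Variables (ip : V -> V -> R[i]) (A : {linear V -> V}) (M : R).
Hypotheses (ip_inner : is_inner_product ip) (A_pos : positive_op ip A).
Hypothesis A_bdd : forall x, ipnorm ip (A x) <= M * ipnorm ip x.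
Hypothesis T_proj : A_projection ip A T.

Lemma Adot_closure_range_IminusT y s :
  in_closure_range ip (IminusT T) s -> Adot ip A (T y) s = 0.
Proof.
apply: (@closure_range_vanish _ _ ip _ (Adot ip A (T y))
         (ipnorm ip (A (T y)) + M * ipnorm ip (T y))).
- exact: AdotBr.
- by move=> v; apply: normr_Adot_le.
- by move=> x; rewrite IminusTE AdotC A_projection_Adot.
Qed.

Lemma A_projection_IminusT : A_projection ip A (IminusT T).
Proof.
move=> y s s_cl; rewrite !IminusTE opprB addrCA subrr addr0 ler_Anorm //.
have -> : y - s = T y + (y - T y - s) by rewrite addrA addrCA subrr addr0.
rewrite AsqD // AdotBr // (AdotC _ _ (T y)) A_projection_Adot //.
by rewrite Adot_closure_range_IminusT // subrr addr0 lerDl Asq_ge0.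
Qed.

End IminusT.

Theorem mainTheorem2 (R : realType) (V : lmodType R[i]) (ip : V -> V -> R[i])
  (HH : separable_hilbert ip)
  (A T : {linear V -> V}) (HA : positive_op ip A) (HT : bounded_op ip T) :
  (A_idempotent A T -> A_idempotent A (IminusT T)) /\
  (A_projection ip A T -> A_projection ip A (IminusT T)).
Proof.
have [ip_inner _ _] := HH; have [[M A_bdd] _] := HA.
split; first exact: A_idempotent_IminusT.
exact: A_projection_IminusT A_bdd.
Qed.
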